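(* Let $K$ be a field of characteristic not equal to $3$, and let $\phi(z)\in K[z]$ be a cubic polynomial. Then there is a degree one polynomial $\eta\in K[z]$ such that $\psi=\eta^{-1}\circ\phi\circ\eta$ is in normal form. Moreover, if another degree one polynomial $\tilde{\eta}\in K[z]$ also gives a normal form $\tilde{\psi}=\tilde{\eta}^{-1}\circ\phi\circ\tilde{\eta}$, then either $\tilde{\eta}=\eta$ and $\tilde{\psi}=\psi$, or else both normal forms $\psi(z)=az^3+bz$ and $\tilde{\psi}(z)=\tilde{a}z^3+bz$ are of the form $az^3+bz$ with the same linear coefficient $b$, and the quotient $\tilde{a}/a$ of their lead coefficients is the square of an element of $K$.
   Context: A cubic polynomial $\phi\in K[z]$ is said to be in normal form if either $\phi(z)=az^3+bz+1$ or $\phi(z)=az^3+bz$ for some $a,b\in K$ (with $a\neq0$). *)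

From HB Require Import structures.
From mathcomp Require Import all_boot all_order all_algebra.
Set Implicit Arguments. Unset Strict Implicit. Unset Printing Implicit Defensive.
Import GRing.Theory.
Local Open Scope ring_scope.

Definition deg_one (K : fieldType) (eta : {poly K}) : Prop := size eta = 2%N.

Definition lin_inv (K : fieldType) (eta : {poly K}) : {poly K} :=
  (lead_coef eta)^-1 *: ('X - (eta`_0)%:P).

(* eta^{-1} o phi o eta; note  p \Po q  is p(q(z)). *)
Definition conj_poly (K : fieldType) (eta phi : {poly K}) : {poly K} :=
  lin_inv eta \Po (phi \Po eta).

Definition normal_form (K : fieldType) (p : {poly K}) : Prop :=
  exists a b : K, a != 0 /\
    (p = a *: 'X^3 + b *: 'X + 1 \/ p = a *: 'X^3 + b *: 'X).

From HB Require Import structures.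
From mathcomp Require Import all_boot all_order all_algebra.
From mathcomp Require Import ring.
Import GRing.Theory.
Local Open Scope ring_scope.

Set Implicit Arguments.
Unset Strict Implicit.

(* Conjugating phi = a z^3 + b z^2 + c z + d by eta = u z + v gives a cubic
   whose z^2 coefficient is u (3 a v + b) and whose constant term is
   (phi(v) - v) / u.  Since 3 a != 0, the first vanishes for exactly one v;
   if v is not a fixed point of phi, the second then forces u = phi(v) - v,
   and otherwise u is free and only rescales the lead coefficient a u^2. *)

Section ConjugateCubic.
Variable K : fieldType.

Lemma coef_last_neq0 (p : {poly K}) n : size p = n.+1 -> p`_n != 0.
Proof. by move=> sp; rewrite -[n]/(n.+1.-1) -sp -lead_coefE lead_coef_eq0 -size_poly_eq0 sp. Qed.

Definition cubic (a b c d : K) : {poly K} :=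
  a *: 'X^3 + b *: 'X^2 + c *: 'X + d%:P.

Lemma coef_cubic a b c d i : (cubic a b c d)`_i = nth 0 [:: d; c; b; a] i.
Proof.
rewrite /cubic !coefD !coefZ !coefXn !coefX coefC.
by case: i => [|[|[|[|i]]]] /=; rewrite ?(mulr0, mulr1, addr0, add0r) ?nth_nil.
Qed.

Lemma cubic_inj a b c d a' b' c' d' :
  cubic a b c d = cubic a' b' c' d' -> [/\ a = a', b = b', c = c' & d = d'].
Proof.
move=> E; have coefE i : nth 0 [:: d; c; b; a] i = nth 0 [:: d'; c'; b'; a'] i.
  by rewrite -!coef_cubic E.
by split; [exact: (coefE 3) | exact: (coefE 2) | exact: (coefE 1) | exact: (coefE 0)].
Qed.

Lemma cubic_coefE (p : {poly K}) : (size p <= 4)%N -> p = cubic p`_3 p`_2 p`_1 p`_0.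
Proof.
move=> sp; apply/polyP => i; rewrite coef_cubic.
by case: i => [|[|[|[|i]]]] //=; rewrite nth_nil nth_default // (leq_trans sp).
Qed.

Lemma horner_cubic a b c d x :
  (cubic a b c d).[x] = a * x ^+ 3 + b * x ^+ 2 + c * x + d.
Proof. by rewrite /cubic !hornerE. Qed.

Lemma scale_cubic k a b c d :
  k *: cubic a b c d = cubic (k * a) (k * b) (k * c) (k * d).
Proof. by rewrite /cubic !scalerDr !scalerA scale_polyC. Qed.

Lemma cubic_odd a c : cubic a 0 c 0 = a *: 'X^3 + c *: 'X.
Proof. by rewrite /cubic scale0r !addr0. Qed.

Lemma normal_form_cubic a b c d :
  normal_form (cubic a b c d) <-> [/\ a != 0, b = 0 & d = 0 \/ d = 1].
Proof.
have cubic_even1 a' c' : a' *: 'X^3 + c' *: 'X + 1 = cubic a' 0 c' 1.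
  by rewrite /cubic scale0r addr0 polyC1.
split.
- case=> a' [c' [a'0 [E | E]]]; move: E.
    by rewrite cubic_even1 => /cubic_inj [-> -> _ ->]; split; last right.
  by rewrite -cubic_odd => /cubic_inj [-> -> _ ->]; split; last left.
- case=> a0 -> [->|->]; exists a, c; split=> //.
    by right; rewrite cubic_odd.
  by left; rewrite cubic_even1.
Qed.

Lemma deg_oneP (eta : {poly K}) :
  deg_one eta -> exists u v, u != 0 /\ eta = u *: 'X + v%:P.
Proof.
rewrite /deg_one => se; exists eta`_1, eta`_0; split.
  exact: coef_last_neq0.
apply/polyP => i; rewrite coefD coefZ coefX coefC.
case: i => [|[|i]] /=; rewrite ?(mulr0, mulr1, addr0, add0r) //.
by rewrite nth_default // se.
Qed.

Lemma deg_one_lin u v : u != 0 -> deg_one (u *: 'X + v%:P : {poly K}).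
Proof.
by move=> u0; rewrite /deg_one -mul_polyC size_MXaddC polyC_eq0 (negbTE u0) size_polyC u0.
Qed.

Lemma lin_inv_lin u v :
  u != 0 -> lin_inv (u *: 'X + v%:P : {poly K}) = u^-1 *: ('X - v%:P).
Proof.
move=> u0; have := @deg_one_lin u v u0; rewrite /lin_inv /deg_one lead_coefE => ->.
by rewrite /= !coefD !coefZ !coefX !coefC /= mulr0 mulr1 addr0 add0r.
Qed.

Lemma conj_poly_cubic u v a b c d : u != 0 ->
  conj_poly (u *: 'X + v%:P) (cubic a b c d) =
  cubic (a * u ^+ 2) (u * (3%:R * a * v + b))
        (3%:R * a * v ^+ 2 + 2%:R * b * v + c) (((cubic a b c d).[v] - v) / u).
Proof.
move=> u0; rewrite /conj_poly lin_inv_lin // comp_polyZ comp_polyB comp_polyX comp_polyC.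
have -> : cubic (a * u ^+ 2) (u * (3%:R * a * v + b))
                (3%:R * a * v ^+ 2 + 2%:R * b * v + c) (((cubic a b c d).[v] - v) / u) =
          u^-1 *: cubic (a * u ^+ 3) (u ^+ 2 * (3%:R * a * v + b))
                (u * (3%:R * a * v ^+ 2 + 2%:R * b * v + c)) ((cubic a b c d).[v] - v).
  by rewrite scale_cubic; congr cubic; field.
congr (_ *: _); rewrite horner_cubic.
rewrite /cubic !comp_polyD !comp_polyZ !comp_Xn_poly comp_polyX comp_polyC -!mul_polyC.
rewrite !(rmorphM, rmorphD, rmorphB, rmorphXn, rmorph_nat) /=.
ring.
Qed.

Lemma normal_form_conj_cubic u v a b c d : a != 0 -> u != 0 ->
  normal_form (conj_poly (u *: 'X + v%:P) (cubic a b c d)) <->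
  3%:R * a * v + b = 0 /\
  ((cubic a b c d).[v] = v \/ u = (cubic a b c d).[v] - v).
Proof.
move=> a0 u0; rewrite conj_poly_cubic // normal_form_cubic.
set t := (cubic a b c d).[v] - v.
have lead_nz : a * u ^+ 2 != 0 by rewrite mulf_neq0 ?expf_neq0.
have critE : u * (3%:R * a * v + b) = 0 <-> 3%:R * a * v + b = 0.
  by split=> [/eqP|->]; rewrite ?mulr0 // mulf_eq0 (negbTE u0) => /eqP.
have fixE : t / u = 0 <-> (cubic a b c d).[v] = v.
  split=> [/eqP | fix_v]; last by rewrite /t fix_v subrr mul0r.
  by rewrite mulf_eq0 invr_eq0 (negbTE u0) orbF subr_eq0 => /eqP.
have moveE : t / u = 1 <-> u = t.
  by split=> [E | <-]; [rewrite -(divfK u0 t) E mul1r | rewrite divff].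
split=> [[_ /critE crit [/fixE|/moveE] h] | [/critE crit [/fixE|/moveE] h]];
  by split=> //; tauto.
Qed.

End ConjugateCubic.

Theorem proposition4p2 (K : fieldType) (phi : {poly K}) :
  ~~ (3%N \in [pchar K]) ->
  size phi = 4%N ->
  exists eta : {poly K},
    deg_one eta /\ normal_form (conj_poly eta phi) /\
    forall eta' : {poly K}, deg_one eta' -> normal_form (conj_poly eta' phi) ->
      (eta' = eta /\ conj_poly eta' phi = conj_poly eta phi) \/
      (exists a a' b : K,
         conj_poly eta phi = a *: 'X^3 + b *: 'X /\
         conj_poly eta' phi = a' *: 'X^3 + b *: 'X /\
         exists s : K, a' / a = s ^+ 2).
Proof.
move=> char3 size_phi.
have three_nz : 3%:R != 0 :> K by apply: contra char3 => three0; rewrite inE /= three0.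
have [a [b [c [d [a_nz ->]]]]] : exists a b c d, a != 0 /\ phi = cubic a b c d.
  exists phi`_3, phi`_2, phi`_1, phi`_0.
  by split; [exact: coef_last_neq0 | exact/cubic_coefE/eq_leq].
set p := cubic a b c d.
pose v0 := - b / (3%:R * a).
have critE v : 3%:R * a * v + b = 0 <-> v = v0.
  split=> [/eqP | ->]; last by rewrite /v0; field; rewrite three_nz a_nz.
  by rewrite /v0 addr_eq0 => /eqP <-; field; rewrite three_nz a_nz.
pose t := p.[v0] - v0.
pose u0 := if t == 0 then 1 else t.
have u0_nz : u0 != 0 by rewrite /u0; case: (eqVneq t 0) => // _; exact: oner_neq0.
exists (u0 *: 'X + v0%:P); split; first exact: deg_one_lin.
split.
  apply/normal_form_conj_cubic => //; split; first exact/critE.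
  rewrite /u0; case: (eqVneq t 0) => [/eqP | //]; last by right.
  by rewrite subr_eq0 => /eqP; left.
move=> eta' /deg_oneP [u [v [u_nz ->]]] /normal_form_conj_cubic [] // /critE -> fix_or_move.
case: (eqVneq t 0) => [t0 | t_nz].
- right; exists (a * 1 ^+ 2), (a * u ^+ 2), (3%:R * a * v0 ^+ 2 + 2%:R * b * v0 + c).
  rewrite !conj_poly_cubic // -/p -/t /u0 t0 eqxx !mul0r (proj2 (critE v0) erefl) !mulr0.
  by rewrite !cubic_odd; split=> //; split=> //; exists u; field.
- left; suff -> : u = u0 by [].
  rewrite /u0 (negbTE t_nz); case: fix_or_move => // fix_v0.
  by case/eqP: t_nz; rewrite /t fix_v0 subrr.
Qed.
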